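(* Let $d\geq 2$ and $U=(u_{ij})_{i,j=1}^d\in\mathcal{U}_d(\mathbb{C})$. The following two conditions are equivalent: (H1) there exist $M\in\mathbb{N}$ and $D_1,\dots,D_{2M}\in\mathcal{DU}_d(\mathbb{C})$ such that $D_1U^\dagger D_2UD_3U^\dagger D_4U\cdots D_{2M-1}U^\dagger D_{2M}U$ is a matrix with all entries non-zero; (H2) there exists $M\in\mathbb{N}$ such that $(P_U^TP_U)^M$ is a matrix with all entries non-zero.
   Context: $\mathcal{U}_d(\mathbb{C})$ denotes the group of $d\times d$ unitary matrices and $\mathcal{DU}_d(\mathbb{C})$ its subgroup of diagonal unitary matrices $\sum_i u_{ii}|i\rangle\langle i|$ with $|u_{ii}|=1$. $P_U=(p_{ij})$ is the $0/1$ matrix with $p_{ij}=0$ if $u_{ij}=0$ and $p_{ij}=1$ if $u_{ij}\neq 0$. *)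

From HB Require Import structures.
From mathcomp Require Import all_boot all_order all_algebra.
From mathcomp Require Import reals.
From mathcomp.real_closed Require Import complex.
Set Implicit Arguments. Unset Strict Implicit. Unset Printing Implicit Defensive.
Import Order.TTheory GRing.Theory Num.Theory.
Local Open Scope ring_scope.
Local Open Scope complex_scope.

Section Defs.
Variable R : realType.

Definition adjmx (d : nat) (A : 'M[R[i]]_d) : 'M[R[i]]_d :=
  \matrix_(k, l) (A l k)^*.

Definition unitary (d : nat) (U : 'M[R[i]]_d) : Prop :=
  U *m adjmx U = 1%:M /\ adjmx U *m U = 1%:M.

Definition diag_unitary (d : nat) (D : 'M[R[i]]_d) : Prop :=
  (forall k l : 'I_d, k != l -> D k l = 0) /\ (forall k : 'I_d, `|D k k| = 1).

(* D_1 U^+ D_2 U D_3 U^+ D_4 U ... D_{2M-1} U^+ D_{2M} U,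
   with D_{j+1} written D j (0-based indexing). *)
Fixpoint alt_prod (d : nat) (D : nat -> 'M[R[i]]_d) (U : 'M[R[i]]_d) (M : nat)
  : 'M[R[i]]_d :=
  match M with
  | 0 => 1%:M
  | M'.+1 => alt_prod D U M' *m (D (2 * M')%N *m adjmx U *m D (2 * M').+1 *m U)
  end.
End Defs.

Definition patmx (R : realType) (d : nat) (U : 'M[R[i]]_d) : 'M[nat]_d :=
  \matrix_(k, l) (if U k l == 0 then 0%N else 1%N).

Definition mxpown (d : nat) (A : 'M[nat]_d) (M : nat) : 'M[nat]_d :=
  iter M (mulmx A) 1%:M.

Definition all_entries_nonzero (T : nmodType) (d : nat) (A : 'M[T]_d) : Prop :=
  forall k l : 'I_d, A k l != 0.

(* (H1) => (H2): a product entry is nonzero only if some summand is, so the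
   support of a product is contained in the boolean product of the supports;
   diagonal factors do not enlarge supports, and the support of U^dagger U is
   governed by P_U^T P_U.
   (H2) => (H1): take D = diag(1, w, ..., w^(d-1)) with w unimodular.  Each
   entry of D_x U^dagger D_y U, and then of the product with the previous
   factors, is a polynomial in w with one coefficient per summand, hence
   nonzero as soon as one summand is.  The unit circle being infinite, a
   unimodular w avoids the finitely many roots of these polynomials. *)

From HB Require Import structures.
From mathcomp Require Import all_boot all_order all_algebra.
From mathcomp Require Import reals.
From mathcomp.real_closed Require Import complex.
From mathcomp Require Import ring lra zify.
Set Implicit Arguments. Unset Strict Implicit. Unset Printing Implicit Defensive.
Import Order.TTheory GRing.Theory Num.Theory.
Local Open Scope ring_scope.

Lemma mulmx_entry_neq0 (T : pzSemiRingType) (m n p : nat)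
    (A : 'M[T]_(m, n)) (B : 'M[T]_(n, p)) i j :
  (A *m B) i j != 0 -> exists k, A i k != 0 /\ B k j != 0.
Proof.
rewrite mxE => /eqP ABij.
have [k Hk] : exists k, A i k * B k j != 0.
  apply/existsP; apply: contra_notT ABij => /existsPn ABk0.
  by rewrite big1 // => k _; apply/eqP/negbNE.
by exists k; split; apply: contraNneq Hk => ->; rewrite ?mul0r ?mulr0.
Qed.

Lemma natmx_mul_entry_neq0 (m n p : nat) (A : 'M[nat]_(m, n)) (B : 'M[nat]_(n, p))
    i k j :
  A i k != 0 -> B k j != 0 -> (A *m B) i j != 0.
Proof.
move=> Aik Bkj; rewrite mxE (bigD1 k) //= -[_ + _]/(addn _ _) addn_eq0.
by rewrite -[_ * _]/(muln _ _) muln_eq0 negb_and (negPf Aik) (negPf Bkj).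
Qed.

Lemma mxpownS (d : nat) (A : 'M[nat]_d) M : mxpown A M.+1 = mxpown A M *m A.
Proof.
rewrite /mxpown; elim: M => [|M IH]; first by rewrite /= mulmx1 mul1mx.
by rewrite [LHS]iterS IH mulmxA -IH.
Qed.

Section UnimodularNonRoot.
Variable R : rcfType.
Local Open Scope complex_scope.

Definition cayley_nat (t : nat) : R[i] := (1 +i* t%:R) / (1 +i* t%:R)^*.

Lemma cayley_nat_den_neq0 t : (1 +i* t%:R : R[i]) != 0.
Proof. by rewrite eq_complex /= oner_eq0. Qed.

Lemma norm_cayley_nat t : `|cayley_nat t| = 1.
Proof.
by rewrite normf_div normcJ divff // normr_eq0 cayley_nat_den_neq0.
Qed.

Lemma cayley_nat_inj : injective cayley_nat.
Proof.
move=> s t /eqP; rewrite eqr_div ?conjc_eq0 ?cayley_nat_den_neq0 //.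
simpc; rewrite eq_complex /= => /andP[_ /eqP st].
by apply/eqP; rewrite -(eqr_nat R); apply/eqP; lra.
Qed.

Lemma exists_unimodular_nonroot (p : {poly R[i]}) :
  p != 0 -> exists2 w : R[i], `|w| = 1 & ~~ root p w.
Proof.
move=> p_neq0.
have : ~~ all (root p) (map cayley_nat (iota 0 (size p))).
  apply/negP => /(max_poly_roots p_neq0).
  rewrite map_inj_uniq ?iota_uniq; last exact: cayley_nat_inj.
  by rewrite size_map size_iota ltnn => /(_ isT).
case/allPn => _ /mapP[t _ ->] p_t.
by exists (cayley_nat t); first exact: norm_cayley_nat.
Qed.

Lemma exists_unimodular_sum_neq0 (d : nat) (I : finType) (c : I -> 'I_d -> R[i]) :
  exists2 w : R[i], `|w| = 1 &
    forall x, (exists l, c x l != 0) -> \sum_(l < d) c x l * w ^+ l != 0.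
Proof.
pose p x := \poly_(l < d) oapp (c x) 0 (insub l : option 'I_d).
have p_neq0 x : (exists l, c x l != 0) -> p x != 0.
  move=> [l cxl]; apply: contraNneq cxl => px0.
  have := congr1 (fun q : {poly R[i]} => q`_l) px0.
  by rewrite /= coef_poly ltn_ord coef0 valK /= => ->.
have [|w w1 w_nonroot] := @exists_unimodular_nonroot (\prod_(x | p x != 0) p x).
  exact/prodf_neq0.
exists w => // x cx_neq0.
have : ~~ root (p x) w.
  apply: contra w_nonroot => px_w; rewrite /root horner_prod.
  by apply/prodf_eq0; exists x; rewrite ?p_neq0.
rewrite /root horner_poly (eq_bigr (fun l : 'I_d => c x l * w ^+ l)) // => l _.
by rewrite valK.
Qed.

End UnimodularNonRoot.

Section Supports.
Variables (R : realType) (d : nat) (U : 'M[R[i]]_d).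
Local Open Scope complex_scope.
Local Notation Q := ((patmx U)^T *m patmx U).

Lemma diag_unitary_neq0 (D : 'M[R[i]]_d) k l :
  diag_unitary D -> D k l != 0 -> k = l.
Proof.
by move=> [D_diag _] Dkl; apply/eqP; apply: contraTT Dkl => /D_diag ->; rewrite eqxx.
Qed.

Lemma patmx_neq0 k l : (patmx U k l != 0) = (U k l != 0).
Proof. by rewrite mxE; case: (U k l =P 0). Qed.

Lemma patmx_gram_neq0 k b : Q k b != 0 <-> exists l, U l k != 0 /\ U l b != 0.
Proof.
split=> [/mulmx_entry_neq0[l []]|[l [Ulk Ulb]]].
  by rewrite mxE !patmx_neq0; exists l.
by apply: (natmx_mul_entry_neq0 (k := l)); rewrite !mxE ?(negPf Ulk) ?(negPf Ulb).
Qed.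

Lemma alt_prod_ext (D D' : nat -> 'M[R[i]]_d) M :
  (forall j, (j < 2 * M)%N -> D j = D' j) -> alt_prod D U M = alt_prod D' U M.
Proof.
elim: M => [|M IH] DD' //=.
by rewrite IH => [|j ltj]; rewrite ?DD' //; lia.
Qed.

Lemma sandwich_support (Dx Dy : 'M[R[i]]_d) k b :
  diag_unitary Dx -> diag_unitary Dy ->
  (Dx *m adjmx U *m Dy *m U) k b != 0 -> Q k b != 0.
Proof.
move=> Dx_diag Dy_diag /mulmx_entry_neq0[l [/mulmx_entry_neq0[l' [S Dyl'l]] Ulb]].
move: S; rewrite (diag_unitary_neq0 Dy_diag Dyl'l).
move=> /mulmx_entry_neq0[k' [Dxkk' Ulk]].
move: Ulk; rewrite -(diag_unitary_neq0 Dx_diag Dxkk') mxE conjc_eq0 => Ulk.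
by apply/patmx_gram_neq0; exists l.
Qed.

Lemma alt_prod_support (D : nat -> 'M[R[i]]_d) M :
  (forall j, (j < 2 * M)%N -> diag_unitary (D j)) ->
  forall a b, alt_prod D U M a b != 0 -> mxpown Q M a b != 0.
Proof.
elim: M => [|M IH] D_diag a b.
  by rewrite !mxE; case: (a =P b); rewrite ?mulr1n ?mulr0n ?eqxx ?oner_eq0.
move=> /mulmx_entry_neq0[k [Aak Skb]]; rewrite mxpownS.
apply: (natmx_mul_entry_neq0 (k := k)).
  by apply: IH Aak => j ltj; apply: D_diag; lia.
by apply: sandwich_support Skb; apply: D_diag; lia.
Qed.

Definition diag_pow (w : R[i]) : 'M[R[i]]_d := diag_mx (\row_(k < d) w ^+ k).

Lemma diag_pow_unitary w : `|w| = 1 -> diag_unitary (diag_pow w).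
Proof.
move=> w1; split=> [k l kl|k]; rewrite !mxE ?(negPf kl) ?mulr0n //.
by rewrite eqxx mulr1n normrX w1 expr1n.
Qed.

Lemma diag_pow_sandwichE w1 w2 k b :
  (diag_pow w1 *m adjmx U *m diag_pow w2 *m U) k b
    = \sum_(l < d) (U l k)^* * U l b * w2 ^+ l * w1 ^+ k.
Proof.
rewrite mul_diag_mx mul_mx_diag mxE.
by apply: eq_bigr => l _; rewrite !mxE; ring.
Qed.

Lemma sandwich_extends_support (A : 'M[R[i]]_d) (S : 'M[nat]_d) :
  (forall a k, S a k != 0 -> A a k != 0) ->
  exists w1 w2 : R[i], [/\ `|w1| = 1, `|w2| = 1 &
    forall a b, (S *m Q) a b != 0 ->
      (A *m (diag_pow w1 *m adjmx U *m diag_pow w2 *m U)) a b != 0].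
Proof.
move=> SA.
have [w2 w2_1 g_neq0] :=
  exists_unimodular_sum_neq0 (fun kb : 'I_d * 'I_d => fun l => (U l kb.1)^* * U l kb.2).
pose g k b := \sum_(l < d) (U l k)^* * U l b * w2 ^+ l.
have [w1 w1_1 f_neq0] :=
  exists_unimodular_sum_neq0 (fun ab : 'I_d * 'I_d => fun k => A ab.1 k * g k ab.2).
exists w1, w2; split=> // a b /mulmx_entry_neq0[k [Sak /patmx_gram_neq0[l [Ulk Ulb]]]].
have gkb : g k b != 0.
  by apply: (g_neq0 (k, b)); exists l; rewrite mulf_neq0 ?conjc_eq0.
rewrite mxE (eq_bigr (fun k => A a k * g k b * w1 ^+ k)) => [|j _].
  exact: (f_neq0 (a, b) (ex_intro _ k (mulf_neq0 (SA _ _ Sak) gkb))).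
by rewrite diag_pow_sandwichE -mulr_suml mulrA.
Qed.

Lemma exists_alt_prod_support M :
  exists2 D : nat -> 'M[R[i]]_d, (forall j, diag_unitary (D j)) &
    forall a b, mxpown Q M a b != 0 -> alt_prod D U M a b != 0.
Proof.
elim: M => [|M [D D_diag DS]].
  exists (fun _ => diag_pow 1) => [j|a b]; first exact/diag_pow_unitary/normr1.
  by rewrite /= !mxE; case: (a =P b); rewrite ?oner_eq0.
have [w1 [w2 [w1_1 w2_1 S]]] := sandwich_extends_support DS.
pose D' j := if j == (2 * M)%N then diag_pow w1
             else if j == (2 * M).+1 then diag_pow w2 else D j.
exists D' => [j|a b].
  by rewrite /D'; do 2?case: ifP => _; by [apply: diag_pow_unitary | apply: D_diag].
have D'_2M : D' (2 * M)%N = diag_pow w1 by rewrite /D' eqxx.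
have D'_2M1 : D' (2 * M).+1 = diag_pow w2 by rewrite /D' ifN ?eqxx //; apply/eqP; lia.
have D'_lt j : (j < 2 * M)%N -> D j = D' j.
  by move=> ltj; rewrite /D' !ifN //; apply/eqP; lia.
by rewrite mxpownS /= D'_2M D'_2M1 -(alt_prod_ext D'_lt); apply: S.
Qed.

End Supports.

Theorem proposition8 (R : realType) (d : nat) (hd : (2 <= d)%N)
  (U : 'M[R[i]]_d) (hU : unitary U) :
  (exists (M : nat) (D : nat -> 'M[R[i]]_d),
      (forall j, (j < 2 * M)%N -> diag_unitary (D j)) /\
      all_entries_nonzero (alt_prod D U M))
  <->
  (exists M : nat, all_entries_nonzero (mxpown ((patmx U)^T *m patmx U) M)).
Proof.
split=> [[M [D [D_diag AD]]]|[M QM]].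
  by exists M => a b; apply: alt_prod_support (AD a b).
have [D D_diag DS] := exists_alt_prod_support U M.
by exists M, D; split=> [j _|a b]; [exact: D_diag | exact: DS].
Qed.
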